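(* Let $G=\mathrm{SL}_2(\mathbb{R})$ act continuously (the map $G\times X\to X$ is continuous) by isometries on a metric space $X$, and let $x_0\in X$. Then either $x_0$ is fixed by all of $G$, or the stabilizer $G_{x_0}$ is compact. *)

From Stdlib Require Import Reals Lra List.
Open Scope R_scope.

(** SL_2(R): real 2x2 matrices [[a,b],[c,d]] with determinant 1. *)
Record SL2 := mkSL2 {
  sa : R; sb : R; sc : R; sd : R;
  sdet : sa * sd - sb * sc = 1 }.

Lemma SL2_mul_det (g h : SL2) :
  (sa g * sa h + sb g * sc h) * (sc g * sb h + sd g * sd h)
  - (sa g * sb h + sb g * sd h) * (sc g * sa h + sd g * sc h) = 1.
Proof.
  destruct g as [a b c d Hg], h as [a' b' c' d' Hh]; simpl.
  replace ((a * a' + b * c') * (c * b' + d * d') - (a * b' + b * d') * (c * a' + d * c'))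
    with ((a * d - b * c) * (a' * d' - b' * c')) by ring.
  rewrite Hg, Hh; ring.
Qed.

Definition SL2_mul (g h : SL2) : SL2 :=
  mkSL2 (sa g * sa h + sb g * sc h) (sa g * sb h + sb g * sd h)
        (sc g * sa h + sd g * sc h) (sc g * sb h + sd g * sd h)
        (SL2_mul_det g h).

Lemma SL2_one_det : 1 * 1 - 0 * 0 = 1.
Proof. ring. Qed.

Definition SL2_one : SL2 := mkSL2 1 0 0 1 SL2_one_det.

(** Distance on SL_2(R) inducing its usual topology (subspace of R^4). *)
Definition SL2_dist (g h : SL2) : R :=
  Rmax (Rmax (Rabs (sa g - sa h)) (Rabs (sb g - sb h)))
       (Rmax (Rabs (sc g - sc h)) (Rabs (sd g - sd h))).

Definition SL2_open (U : SL2 -> Prop) : Prop :=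
  forall g, U g -> exists eps, eps > 0 /\ forall h, SL2_dist g h < eps -> U h.

Definition SL2_compact (S : SL2 -> Prop) : Prop :=
  forall (I : Type) (U : I -> SL2 -> Prop),
    (forall i, SL2_open (U i)) ->
    (forall g, S g -> exists i, U i g) ->
    exists l : list I, forall g, S g -> exists i, In i l /\ U i g.

Record is_metric {X : Type} (dist : X -> X -> R) : Prop := {
  dist_nonneg : forall x y, 0 <= dist x y;
  dist_eq0 : forall x y, dist x y = 0 <-> x = y;
  dist_sym : forall x y, dist x y = dist y x;
  dist_tri : forall x y z, dist x z <= dist x y + dist y z }.

Record is_cont_isom_action {X : Type} (dist : X -> X -> R)
    (act : SL2 -> X -> X) : Prop := {
  act_one : forall x, act SL2_one x = x;
  act_mul : forall g h x, act (SL2_mul g h) x = act g (act h x);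
  act_isom : forall g x y, dist (act g x) (act g y) = dist x y;
  (* joint continuity of G x X -> X (product topology) *)
  act_cont : forall g x eps, eps > 0 -> exists delta, delta > 0 /\
      forall h y, SL2_dist g h < delta -> dist x y < delta ->
        dist (act g x) (act h y) < eps }.

Definition stabilizer {X : Type} (act : SL2 -> X -> X) (x0 : X) : SL2 -> Prop :=
  fun g => act g x0 = x0.

From Pilot Require Import Defs.
From Stdlib Require Import Reals List Lra Lia Psatz.
From Stdlib Require Import Classical ClassicalEpsilon ProofIrrelevance.
Open Scope R_scope.

(* If the stabilizer of x0 is bounded, it is compact: it is closed by continuity of the
   action, and closed bounded subsets of SL_2(R) are compact (Heine-Borel, by bisection of
   boxes).  Otherwise it contains elements h with a large column, say the first, of norm r.
   A rotation k brings h to upper triangular form k h = u(m) diag(r, 1/r), and then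
   d(u(s) k x0, k x0) = d(u(s / r^2) x0, x0): the point k x0 is almost fixed by the upper
   unipotents u(s), |s| <= n.  Compactness of the rotation group yields one rotation k that
   works for every n, so z = k x0 is fixed by all u(s).  Then d(g z, z) depends only on the
   lower-left entry of g, and continuity at the identity forces it to vanish (Mautner
   phenomenon): z, hence also x0 = k^-1 z, is fixed by SL_2(R). *)

Lemma SL2_ext (g h : SL2) :
  sa g = sa h -> sb g = sb h -> sc g = sc h -> sd g = sd h -> g = h.
Proof.
  destruct g as [a b c d Hg], h as [a' b' c' d' Hh]; simpl; intros; subst.
  f_equal; apply proof_irrelevance.
Qed.

Definition SL2_inv (g : SL2) : SL2 :=
  mkSL2 (sd g) (- sb g) (- sc g) (sa g) ltac:(pose proof (sdet g); lra).

Lemma SL2_mulVg (g : SL2) : SL2_mul (SL2_inv g) g = SL2_one.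
Proof. pose proof (sdet g); apply SL2_ext; simpl; lra. Qed.

Lemma SL2_mulgV (g : SL2) : SL2_mul g (SL2_inv g) = SL2_one.
Proof. pose proof (sdet g); apply SL2_ext; simpl; lra. Qed.

Definition SL2_upper (s : R) : SL2 := mkSL2 1 s 0 1 ltac:(ring).
Definition SL2_lower (c : R) : SL2 := mkSL2 1 0 c 1 ltac:(ring).
Definition SL2_diag (a : R) (Ha : a <> 0) : SL2 := mkSL2 a 0 0 (/ a) ltac:(field; exact Ha).

Definition is_rotation (k : SL2) : Prop := sa k = sd k /\ sb k = - sc k.

Definition quarter_turn : SL2 := mkSL2 0 (-1) 1 0 ltac:(ring).

Lemma rotation_mul (g h : SL2) :
  is_rotation g -> is_rotation h -> is_rotation (SL2_mul g h).
Proof. intros [Ha Hb] [Ha' Hb']; split; simpl; rewrite Ha, Hb, Ha', Hb'; ring. Qed.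

Lemma rotation_quarter_turn_inv : is_rotation (SL2_inv quarter_turn).
Proof. split; simpl; ring. Qed.

Lemma rotation_entries_bounded (k : SL2) :
  is_rotation k ->
  Rabs (sa k) <= 1 /\ Rabs (sb k) <= 1 /\ Rabs (sc k) <= 1 /\ Rabs (sd k) <= 1.
Proof.
  intros [Had Hbc]. pose proof (sdet k) as D. rewrite <- Had, Hbc in D.
  rewrite <- Had, Hbc, Rabs_Ropp.
  assert (Rabs (sa k) <= 1) by (apply Rabs_le; split; nra).
  assert (Rabs (sc k) <= 1) by (apply Rabs_le; split; nra).
  tauto.
Qed.

Lemma SL2_upper_double_coset (g g' : SL2) :
  sc g = sc g' -> sc g <> 0 ->
  exists x y, g = SL2_mul (SL2_upper x) (SL2_mul g' (SL2_upper y)).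
Proof.
  intros Hc Hc0. pose proof (sdet g) as D. pose proof (sdet g') as D'.
  rewrite <- Hc in D'.
  exists ((sa g - sa g') / sc g), ((sd g - sd g') / sc g).
  apply SL2_ext; simpl; rewrite <- ?Hc; try field; auto.
  apply (Rmult_eq_reg_r (sc g)); [|auto]. field_simplify; [|auto]. nra.
Qed.

(* k g is upper triangular with diagonal (r, 1/r), r^2 = a^2 + c^2, and such a matrix
   conjugates u(s) into u(s / r^2). *)
Lemma SL2_rotate_to_upper (g : SL2) :
  sa g ^ 2 + sc g ^ 2 > 0 ->
  exists k, is_rotation k /\ forall s,
    SL2_mul (SL2_upper s) (SL2_mul k g)
    = SL2_mul (SL2_mul k g) (SL2_upper (s / (sa g ^ 2 + sc g ^ 2))).
Proof.
  intros Hpos. pose (r := sqrt (sa g ^ 2 + sc g ^ 2)).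
  assert (Hrr : r * r = sa g ^ 2 + sc g ^ 2) by (apply sqrt_sqrt; lra).
  assert (Hr : r <> 0) by (pose proof (sqrt_lt_R0 _ Hpos); unfold r; lra).
  assert (Dk : sa g / r * (sa g / r) - sc g / r * (- sc g / r) = 1).
  { field_simplify_eq; [lra | auto]. }
  exists (mkSL2 (sa g / r) (sc g / r) (- sc g / r) (sa g / r) Dk).
  split; [split; simpl; [reflexivity | field; auto] |].
  intros s.
  assert (Hka : sa g / r * sa g + sc g / r * sc g = r).
  { field_simplify_eq; [lra | auto]. }
  assert (Hkd : - sc g / r * sb g + sa g / r * sd g = / r).
  { pose proof (sdet g). field_simplify_eq; [lra | auto]. }
  rewrite <- Hrr.
  apply SL2_ext; simpl; rewrite ?Hka, ?Hkd; field; auto.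
Qed.

Lemma Rabs_le_inv (x M : R) : Rabs x <= M -> - M <= x <= M.
Proof. split_Rabs; lra. Qed.

Lemma SL2_dist_lt_iff (g h : SL2) (e : R) :
  SL2_dist g h < e <->
  Rabs (sa g - sa h) < e /\ Rabs (sb g - sb h) < e /\
  Rabs (sc g - sc h) < e /\ Rabs (sd g - sd h) < e.
Proof. unfold SL2_dist; rewrite !Rmax_Rlt; tauto. Qed.

Lemma SL2_dist_le (g h : SL2) (e : R) :
  Rabs (sa g - sa h) <= e -> Rabs (sb g - sb h) <= e ->
  Rabs (sc g - sc h) <= e -> Rabs (sd g - sd h) <= e -> SL2_dist g h <= e.
Proof. intros; unfold SL2_dist; repeat apply Rmax_lub; assumption. Qed.

Lemma SL2_dist_one_upper (s e : R) : Rabs s < e -> SL2_dist SL2_one (SL2_upper s) < e.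
Proof.
  intros Hs; pose proof (Rabs_pos s); apply SL2_dist_lt_iff; simpl.
  replace (0 - s) with (- s) by ring; rewrite !Rminus_diag, Rabs_R0, Rabs_Ropp.
  repeat split; lra.
Qed.

Lemma SL2_dist_one_lower (c e : R) : Rabs c < e -> SL2_dist SL2_one (SL2_lower c) < e.
Proof.
  intros Hc; pose proof (Rabs_pos c); apply SL2_dist_lt_iff; simpl.
  replace (0 - c) with (- c) by ring; rewrite !Rminus_diag, Rabs_R0, Rabs_Ropp.
  repeat split; lra.
Qed.

Lemma SL2_unbounded_column (P : SL2 -> Prop) :
  ~ (exists M, forall g, P g ->
       Rabs (sa g) <= M /\ Rabs (sb g) <= M /\ Rabs (sc g) <= M /\ Rabs (sd g) <= M) ->
  forall R0, exists g, P g /\ (sa g ^ 2 + sc g ^ 2 > R0 \/ sb g ^ 2 + sd g ^ 2 > R0).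
Proof.
  intros Hunb R0; apply NNPP; intro Hno; apply Hunb.
  assert (Hsq : forall x y, x ^ 2 + y ^ 2 <= R0 -> Rabs x <= Rabs R0 + 1).
  { intros x y Hxy; rewrite <- pow2_abs in Hxy.
    pose proof (Rabs_pos x); pose proof (Rle_abs R0); pose proof (pow2_ge_0 y); nra. }
  exists (Rabs R0 + 1); intros g Pg.
  assert (Hac : sa g ^ 2 + sc g ^ 2 <= R0) by (apply Rnot_gt_le; intro; eauto).
  assert (Hbd : sb g ^ 2 + sd g ^ 2 <= R0) by (apply Rnot_gt_le; intro; eauto).
  repeat split; [eapply Hsq, Hac | eapply Hsq, Hbd | | ]; eapply Hsq;
    rewrite Rplus_comm; eassumption.
Qed.

Definition SL2_closed (P : SL2 -> Prop) : Prop :=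
  forall g, (forall e, e > 0 -> exists h, P h /\ SL2_dist g h < e) -> P g.

Lemma SL2_closed_and (P Q : SL2 -> Prop) :
  SL2_closed P -> SL2_closed Q -> SL2_closed (fun g => P g /\ Q g).
Proof.
  intros HP HQ g Hg; split; [apply HP | apply HQ]; intros e He;
    destruct (Hg e He) as (h & [? ?] & ?); eauto.
Qed.

Lemma rotations_closed : SL2_closed is_rotation.
Proof.
  assert (Hzero : forall x, (forall e, e > 0 -> Rabs x < 2 * e) -> x = 0).
  { intros x Hx. destruct (Req_dec x 0) as [|Hne]; [assumption|].
    specialize (Hx (Rabs x / 2) ltac:(apply Rabs_pos_lt in Hne; lra)); lra. }
  intros g Hg; split; apply Rminus_diag_uniq; apply Hzero; intros e He;
    destruct (Hg e He) as (h & [Had Hbc] & Hd); apply SL2_dist_lt_iff in Hd;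
    destruct Hd as (H1 & H2 & H3 & H4); apply Rabs_def2 in H1, H2, H3, H4;
    apply Rabs_def1; lra.
Qed.

Lemma SL2_open_not_closed (P : SL2 -> Prop) : SL2_closed P -> SL2_open (fun g => ~ P g).
Proof.
  intros Hcl g Hg; apply NNPP; intro Hn; apply Hg, Hcl; intros e He.
  apply NNPP; intro Hx; apply Hn; exists e; split; [exact He |].
  intros h Hh HPh; apply Hx; exists h; auto.
Qed.

(** * Heine-Borel in SL_2(R) *)

Lemma nested_intervals (a w : nat -> R) :
  (forall n, 0 <= w n) -> Un_growing a ->
  Un_decreasing (fun n => a n + w n) -> Un_cv w 0 ->
  exists p, forall n, a n <= p <= a n + w n.
Proof.
  intros Hw Ha Haw Hw0.
  assert (Hub : has_ub a).
  { exists (a 0%nat + w 0%nat); intros x [n ->].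
    pose proof (decreasing_prop _ 0 n Haw (Nat.le_0_l n)); pose proof (Hw n); lra. }
  destruct (growing_cv a Ha Hub) as [p Hp].
  assert (Hpw : Un_cv (fun n => a n + w n) p).
  { replace p with (p + 0) by ring; apply CV_plus; assumption. }
  exists p; intros n; split.
  - exact (growing_ineq a p Ha Hp n).
  - exact (decreasing_ineq _ p Haw Hpw n).
Qed.

Lemma Un_cv_squeeze (u w : nat -> R) (l : R) :
  Un_cv w 0 -> (forall n, Rabs (u n - l) <= w n) -> Un_cv u l.
Proof.
  intros Hw Hu e He. destruct (Hw e He) as [N HN]. exists N; intros n Hn.
  specialize (HN n Hn); specialize (Hu n); unfold R_dist in *.
  rewrite Rminus_0_r in HN; pose proof (Rle_abs (w n)); lra.
Qed.

Lemma SL2_det_limit (g : nat -> SL2) (a b c d : R) :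
  Un_cv (fun n => sa (g n)) a -> Un_cv (fun n => sb (g n)) b ->
  Un_cv (fun n => sc (g n)) c -> Un_cv (fun n => sd (g n)) d ->
  a * d - b * c = 1.
Proof.
  intros Ha Hb Hc Hd.
  apply (UL_sequence (fun n => sa (g n) * sd (g n) - sb (g n) * sc (g n)));
    [apply CV_minus; apply CV_mult; assumption |].
  intros e He; exists 0%nat; intros n _.
  rewrite sdet; unfold R_dist; rewrite Rminus_diag, Rabs_R0; exact He.
Qed.

Definition slab (f : SL2 -> R) (a w : R) (g : SL2) : Prop := a <= f g <= a + w.

Record box := mkbox { lo_a : R; lo_b : R; lo_c : R; lo_d : R; width : R }.

Definition in_box (B : box) (g : SL2) : Prop :=
  slab sa (lo_a B) (width B) g /\ slab sb (lo_b B) (width B) g /\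
  slab sc (lo_c B) (width B) g /\ slab sd (lo_d B) (width B) g.

Definition half_step (a w a' : R) : Prop := a' = a \/ a' = a + w / 2.

Definition box_child (B B' : box) : Prop :=
  width B' = width B / 2 /\
  half_step (lo_a B) (width B) (lo_a B') /\ half_step (lo_b B) (width B) (lo_b B') /\
  half_step (lo_c B) (width B) (lo_c B') /\ half_step (lo_d B) (width B) (lo_d B').

Section FiniteSubcovers.

Context {I : Type} (U : I -> SL2 -> Prop).

Definition finitely_covered (T : SL2 -> Prop) : Prop :=
  exists l : list I, forall g, T g -> exists i, In i l /\ U i g.

Lemma finitely_covered_mono (T T' : SL2 -> Prop) :
  (forall g, T' g -> T g) -> finitely_covered T -> finitely_covered T'.
Proof. intros HT [l Hl]; exists l; auto. Qed.

Lemma finitely_covered_union (T1 T2 : SL2 -> Prop) :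
  finitely_covered T1 -> finitely_covered T2 ->
  finitely_covered (fun g => T1 g \/ T2 g).
Proof.
  intros [l1 H1] [l2 H2]; exists (l1 ++ l2); intros g [Tg | Tg];
    [destruct (H1 g Tg) as (i & ? & ?) | destruct (H2 g Tg) as (i & ? & ?)];
    exists i; split; auto; apply in_or_app; auto.
Qed.

Lemma slab_half_uncovered (f : SL2 -> R) (a w : R) (Rest : SL2 -> Prop) :
  ~ finitely_covered (fun g => slab f a w g /\ Rest g) ->
  exists a', half_step a w a' /\
    ~ finitely_covered (fun g => slab f a' (w / 2) g /\ Rest g).
Proof.
  intros Hbad; apply NNPP; intro Hn; apply Hbad.
  assert (Hhalf : forall a', half_step a w a' ->
             finitely_covered (fun g => slab f a' (w / 2) g /\ Rest g)).
  { intros a' Ha'; apply NNPP; intro Hc; apply Hn; eauto. }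
  eapply finitely_covered_mono;
    [| apply finitely_covered_union; apply Hhalf; [left | right]; reflexivity].
  intros g [[Hlo Hhi] Hr]; unfold slab.
  destruct (Rle_or_lt (f g) (a + w / 2)); [left | right]; split; auto; lra.
Qed.

Lemma uncovered_box_child (P : SL2 -> Prop) (B : box) :
  ~ finitely_covered (fun g => P g /\ in_box B g) ->
  exists B', box_child B B' /\ ~ finitely_covered (fun g => P g /\ in_box B' g).
Proof.
  set (w := width B); intros H0.
  destruct (slab_half_uncovered sa (lo_a B) w (fun g =>
      slab sb (lo_b B) w g /\ slab sc (lo_c B) w g /\ slab sd (lo_d B) w g /\ P g))
    as (a1 & Ha1 & H1).
  { intro Hc; apply H0; revert Hc; apply finitely_covered_mono; unfold in_box; tauto. }
  destruct (slab_half_uncovered sb (lo_b B) w (fun g =>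
      slab sa a1 (w / 2) g /\ slab sc (lo_c B) w g /\ slab sd (lo_d B) w g /\ P g))
    as (b1 & Hb1 & H2).
  { intro Hc; apply H1; revert Hc; apply finitely_covered_mono; tauto. }
  destruct (slab_half_uncovered sc (lo_c B) w (fun g =>
      slab sa a1 (w / 2) g /\ slab sb b1 (w / 2) g /\ slab sd (lo_d B) w g /\ P g))
    as (c1 & Hc1 & H3).
  { intro Hc; apply H2; revert Hc; apply finitely_covered_mono; tauto. }
  destruct (slab_half_uncovered sd (lo_d B) w (fun g =>
      slab sa a1 (w / 2) g /\ slab sb b1 (w / 2) g /\ slab sc c1 (w / 2) g /\ P g))
    as (d1 & Hd1 & H4).
  { intro Hc; apply H3; revert Hc; apply finitely_covered_mono; tauto. }
  exists (mkbox a1 b1 c1 d1 (w / 2)); split; [repeat split; assumption |].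
  intro Hc; apply H4; revert Hc; apply finitely_covered_mono; unfold in_box; simpl; tauto.
Qed.

End FiniteSubcovers.

Lemma halving_intervals_limit (a w : nat -> R) :
  (forall n, 0 <= w n) ->
  (forall n, w (S n) = w n / 2 /\ half_step (a n) (w n) (a (S n))) ->
  Un_cv w 0 -> exists p, forall n, a n <= p <= a n + w n.
Proof.
  intros Hw Hstep; apply nested_intervals; [exact Hw | |];
    intros n; destruct (Hstep n) as [Hwn [-> | ->]]; pose proof (Hw n); lra.
Qed.

Lemma shrinking_boxes_point (P : SL2 -> Prop) (Bs : nat -> box) :
  SL2_closed P ->
  (forall n, box_child (Bs n) (Bs (S n))) ->
  Un_cv (fun n => width (Bs n)) 0 ->
  (forall n, exists g, P g /\ in_box (Bs n) g) ->
  exists p, P p /\ forall n g, in_box (Bs n) g -> SL2_dist p g <= width (Bs n).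
Proof.
  intros Hcl Hchild Hw0 Hne.
  assert (Hw : forall n, 0 <= width (Bs n)).
  { intros n; destruct (Hne n) as (g & _ & [? ?] & _); lra. }
  destruct (halving_intervals_limit (fun n => lo_a (Bs n)) _ Hw) as [pa Hpa];
    [intros n; destruct (Hchild n) as (? & ? & _); auto | exact Hw0 |].
  destruct (halving_intervals_limit (fun n => lo_b (Bs n)) _ Hw) as [pb Hpb];
    [intros n; destruct (Hchild n) as (? & _ & ? & _); auto | exact Hw0 |].
  destruct (halving_intervals_limit (fun n => lo_c (Bs n)) _ Hw) as [pc Hpc];
    [intros n; destruct (Hchild n) as (? & _ & _ & ? & _); auto | exact Hw0 |].
  destruct (halving_intervals_limit (fun n => lo_d (Bs n)) _ Hw) as [pd Hpd];
    [intros n; destruct (Hchild n) as (? & _ & _ & _ & ?); auto | exact Hw0 |].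
  assert (Hnear : forall n g, in_box (Bs n) g ->
    Rabs (sa g - pa) <= width (Bs n) /\ Rabs (sb g - pb) <= width (Bs n) /\
    Rabs (sc g - pc) <= width (Bs n) /\ Rabs (sd g - pd) <= width (Bs n)).
  { intros n g (Ha & Hb & Hc & Hd); unfold slab in *;
      specialize (Hpa n); specialize (Hpb n); specialize (Hpc n); specialize (Hpd n);
      simpl in *; repeat split; apply Rabs_le; lra. }
  destruct (choice (fun n g => P g /\ in_box (Bs n) g) Hne) as [gs Hgs].
  assert (Hdet : pa * pd - pb * pc = 1).
  { apply (SL2_det_limit gs); apply (Un_cv_squeeze _ _ _ Hw0); intros n;
      destruct (Hnear n (gs n) (proj2 (Hgs n))) as (? & ? & ? & ?); assumption. }
  assert (Hball : forall n g, in_box (Bs n) g ->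
            SL2_dist (mkSL2 pa pb pc pd Hdet) g <= width (Bs n)).
  { intros n g Hg; destruct (Hnear n g Hg) as (? & ? & ? & ?);
      apply SL2_dist_le; simpl; rewrite Rabs_minus_sym; assumption. }
  exists (mkSL2 pa pb pc pd Hdet); split; [| exact Hball].
  apply Hcl; intros e He.
  destruct (Hw0 e He) as [N HN]; specialize (HN N (le_n N)).
  unfold R_dist in HN; rewrite Rminus_0_r in HN.
  exists (gs N); split; [apply Hgs |].
  pose proof (Hball N (gs N) (proj2 (Hgs N))); pose proof (Rle_abs (width (Bs N))); lra.
Qed.

Theorem SL2_closed_bounded_compact (P : SL2 -> Prop) (M : R) :
  SL2_closed P ->
  (forall g, P g ->
     Rabs (sa g) <= M /\ Rabs (sb g) <= M /\ Rabs (sc g) <= M /\ Rabs (sd g) <= M) ->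
  SL2_compact P.
Proof.
  intros Hcl Hbd I U Hopen Hcov.
  set (bad B := ~ finitely_covered U (fun g => P g /\ in_box B g)).
  apply NNPP; intro Hnf.
  set (B0 := mkbox (- M) (- M) (- M) (- M) (2 * M)).
  assert (Hbad0 : bad B0).
  { intro Hc; apply Hnf; revert Hc; apply finitely_covered_mono.
    intros g Pg; split; [exact Pg |].
    destruct (Hbd g Pg) as (Ha & Hb & Hc & Hd);
      apply Rabs_le_inv in Ha, Hb, Hc, Hd.
    unfold in_box, slab; simpl; lra. }
  destruct (choice (fun B B' => bad B -> box_child B B' /\ bad B')) as [next Hnext].
  { intros B; destruct (classic (bad B)) as [HB | HB].
    - destruct (uncovered_box_child _ _ _ HB) as (B' & ?); exists B'; tauto.
    - exists B; tauto. }
  set (Bs n := Nat.iter n next B0).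
  assert (Hbad : forall n, bad (Bs n)).
  { induction n as [|n IH]; [exact Hbad0 | apply (Hnext _ IH)]. }
  assert (Hchild : forall n, box_child (Bs n) (Bs (S n))) by (intro n; apply Hnext, Hbad).
  assert (Hwidth : forall n, width (Bs n) = 2 * M / 2 ^ n).
  { induction n as [|n IH]; [simpl; field |].
    rewrite (proj1 (Hchild n)), IH; simpl; field; apply pow_nonzero; lra. }
  assert (Hw0 : Un_cv (fun n => width (Bs n)) 0).
  { intros e He; destruct (cv_pow_half (2 * M) e He) as [N HN].
    exists N; intros n Hn; rewrite Hwidth; apply HN, Hn. }
  destruct (shrinking_boxes_point P Bs Hcl Hchild Hw0) as (p & Pp & Hp).
  { intros n; apply NNPP; intro Hn; apply (Hbad n); exists nil.
    intros g Hg; exfalso; apply Hn; exists g; exact Hg. }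
  destruct (Hcov p Pp) as [i Ui]; destruct (Hopen i p Ui) as (e & He & Hball).
  destruct (Hw0 e He) as [N HN]; specialize (HN N (le_n N)).
  unfold R_dist in HN; rewrite Rminus_0_r in HN.
  apply (Hbad N); exists (i :: nil); intros g [_ Hg].
  exists i; split; [left; reflexivity |]; apply Hball.
  pose proof (Hp N g Hg); pose proof (Rle_abs (width (Bs N))); lra.
Qed.

Lemma SL2_compact_nested (K : SL2 -> Prop) (C : nat -> SL2 -> Prop) :
  SL2_compact K -> (forall n, SL2_closed (C n)) -> (forall n g, C n g -> K g) ->
  (forall m n g, (m <= n)%nat -> C n g -> C m g) -> (forall n, exists g, C n g) ->
  exists g, forall n, C n g.
Proof.
  intros HK Hcl Hsub Hmono Hne; apply NNPP; intro Hno.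
  destruct (HK nat (fun n g => ~ C n g)) as [l Hl].
  - intros n; apply SL2_open_not_closed, Hcl.
  - intros g _; apply not_all_ex_not; intro Hall; apply Hno; eauto.
  - destruct (Hne (list_max l)) as [g Hg].
    destruct (Hl g (Hsub _ _ Hg)) as (i & Hi & Hni); apply Hni; refine (Hmono _ _ _ _ Hg).
    assert (Hmax : Forall (fun k => (k <= list_max l)%nat) l) by (apply list_max_le; lia).
    rewrite Forall_forall in Hmax; auto.
Qed.

Lemma SL2_compact_rotations : SL2_compact is_rotation.
Proof. exact (SL2_closed_bounded_compact _ 1 rotations_closed rotation_entries_bounded). Qed.

(** * The isometric action *)

Section IsometricAction.

Variables (X : Type) (dist : X -> X -> R) (act : SL2 -> X -> X).
Hypothesis Hmet : is_metric dist.
Hypothesis Hact : is_cont_isom_action dist act.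

Lemma eq_of_dist_small (x y : X) : (forall e, e > 0 -> dist x y < e) -> x = y.
Proof.
  intros H; apply (Defs.dist_eq0 _ Hmet).
  destruct (Rle_lt_or_eq_dec _ _ (Defs.dist_nonneg _ Hmet x y)) as [Hlt | Heq]; [|auto].
  specialize (H (dist x y / 2)); lra.
Qed.

Lemma act_comp (g h : SL2) (x : X) : act g (act h x) = act (SL2_mul g h) x.
Proof. symmetry; apply (act_mul _ _ Hact). Qed.

Lemma orbit_continuous (g : SL2) (x : X) (e : R) :
  e > 0 -> exists d, d > 0 /\ forall h, SL2_dist g h < d -> dist (act g x) (act h x) < e.
Proof.
  intros He; destruct (act_cont _ _ Hact g x e He) as (d & Hd & H).
  exists d; split; [exact Hd |]; intros h Hh; apply H; [exact Hh |].
  rewrite (proj2 (Defs.dist_eq0 _ Hmet x x) eq_refl); exact Hd.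
Qed.

Lemma orbit_continuous_at_one (x : X) (e : R) :
  e > 0 -> exists d, d > 0 /\ forall h, SL2_dist SL2_one h < d -> dist (act h x) x < e.
Proof.
  intros He; destruct (orbit_continuous SL2_one x e He) as (d & Hd & H).
  exists d; split; [exact Hd |]; intros h Hh.
  rewrite (Defs.dist_sym _ Hmet), <- (act_one _ _ Hact x) at 1; apply H, Hh.
Qed.

Lemma upper_orbit_small (x : X) (e : R) :
  e > 0 -> exists d, d > 0 /\ forall s, Rabs s < d -> dist (act (SL2_upper s) x) x < e.
Proof.
  intros He; destruct (orbit_continuous_at_one x e He) as (d & Hd & H).
  exists d; split; [exact Hd |]; intros s Hs; apply H, SL2_dist_one_upper, Hs.
Qed.

Lemma lower_orbit_small (x : X) (e : R) :
  e > 0 -> exists d, d > 0 /\ forall c, Rabs c < d -> dist (act (SL2_lower c) x) x < e.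
Proof.
  intros He; destruct (orbit_continuous_at_one x e He) as (d & Hd & H).
  exists d; split; [exact Hd |]; intros c Hc; apply H, SL2_dist_one_lower, Hc.
Qed.

Lemma stabilizer_closed (x : X) : SL2_closed (stabilizer act x).
Proof.
  intros g Hg; apply eq_of_dist_small; intros e He.
  destruct (orbit_continuous g x e He) as (d & Hd & H).
  destruct (Hg d Hd) as (h & Hh & Hgh).
  specialize (H h Hgh); unfold stabilizer in Hh; rewrite Hh in H; exact H.
Qed.

Section FixedByUpper.

Variable z : X.
Hypothesis z_upper_fixed : forall s, act (SL2_upper s) z = z.

Lemma dist_upper_double_coset (g g' : SL2) :
  sc g = sc g' -> sc g <> 0 -> dist (act g z) z = dist (act g' z) z.
Proof.
  intros Hc Hc0; destruct (SL2_upper_double_coset g g' Hc Hc0) as (x & y & ->).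
  rewrite <- !act_comp, z_upper_fixed; rewrite <- (z_upper_fixed x) at 2.
  apply (act_isom _ _ Hact).
Qed.

Lemma upper_fixed_diag_fixed (a : R) (Ha : a <> 0) : act (SL2_diag a Ha) z = z.
Proof.
  set (y := act (SL2_diag a Ha) z).
  apply eq_of_dist_small; intros e He.
  destruct (lower_orbit_small y (e / 2)) as (d1 & Hd1 & H1); [lra |].
  destruct (lower_orbit_small z (e / 2)) as (d2 & Hd2 & H2); [lra |].
  set (m := Rmin d1 d2); set (A := Rabs a + 1).
  assert (Hm : 0 < m) by (apply Rmin_pos; assumption).
  assert (Hm1 : m <= d1) by apply Rmin_l; assert (Hm2 : m <= d2) by apply Rmin_r.
  assert (HA : 1 <= A) by (pose proof (Rabs_pos a); unfold A; lra).
  set (t := m / (2 * A)).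
  assert (HtA : t * A = m / 2) by (unfold t; field; lra).
  assert (Ht : 0 < t) by (unfold t; apply Rdiv_lt_0_compat; lra).
  assert (Ht1 : Rabs t < d1).
  { rewrite Rabs_pos_eq by lra; nra. }
  assert (Hta : Rabs (t * a) < d2).
  { rewrite Rabs_mult, Rabs_pos_eq by lra; unfold A in HtA; lra. }
  (* lower t * diag a is close to diag a and lies in the double coset of lower (t a). *)
  assert (Hdc : dist (act (SL2_lower t) y) z = dist (act (SL2_lower (t * a)) z) z).
  { unfold y; rewrite act_comp; apply dist_upper_double_coset; simpl; [ring |].
    rewrite Rmult_0_r, Rplus_0_r; apply Rmult_integral_contrapositive_currified; lra. }
  specialize (H1 t Ht1); specialize (H2 (t * a) Hta).
  pose proof (Defs.dist_tri _ Hmet y (act (SL2_lower t) y) z) as Htri.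
  rewrite (Defs.dist_sym _ Hmet y (act (SL2_lower t) y)) in Htri; lra.
Qed.

Lemma upper_fixed_fixed_nonzero_c (g : SL2) : sc g <> 0 -> act g z = z.
Proof.
  intros Hc; apply eq_of_dist_small; intros e He.
  destruct (lower_orbit_small z e He) as (d & Hd & H).
  assert (Hq : sc g / (d / 2) <> 0)
    by (apply Rmult_integral_contrapositive_currified; [auto | apply Rinv_neq_0_compat; lra]).
  rewrite (dist_upper_double_coset g (SL2_mul (SL2_lower (d / 2)) (SL2_diag _ Hq))
    ltac:(simpl; field; lra) Hc).
  rewrite <- act_comp, upper_fixed_diag_fixed.
  apply H; rewrite Rabs_pos_eq; lra.
Qed.

Lemma upper_fixed_fixed (g : SL2) : act g z = z.
Proof.
  destruct (Req_dec (sc g) 0) as [H0 | H0]; [| exact (upper_fixed_fixed_nonzero_c g H0)].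
  assert (Hd : sd g <> 0) by (pose proof (sdet g); intro; rewrite H0 in *; nra).
  replace g with (SL2_mul (SL2_mul g (SL2_lower 1)) (SL2_lower (-1)))
    by (apply SL2_ext; simpl; ring).
  rewrite <- act_comp, (upper_fixed_fixed_nonzero_c (SL2_lower (-1))),
    (upper_fixed_fixed_nonzero_c (SL2_mul g (SL2_lower 1)));
    [reflexivity | simpl; rewrite H0; lra | simpl; lra].
Qed.

End FixedByUpper.

Lemma upper_displacement_rescaled (p : X) (h : SL2) :
  act h p = p -> sa h ^ 2 + sc h ^ 2 > 0 ->
  exists k, is_rotation k /\ forall s,
    dist (act (SL2_upper s) (act k p)) (act k p)
    = dist (act (SL2_upper (s / (sa h ^ 2 + sc h ^ 2))) p) p.
Proof.
  intros Hh Hpos; destruct (SL2_rotate_to_upper h Hpos) as (k & Hk & Hcomm).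
  exists k; split; [exact Hk |]; intros s.
  replace (act k p) with (act (SL2_mul k h) p) by (rewrite <- act_comp, Hh; reflexivity).
  rewrite act_comp, Hcomm, <- act_comp; apply (act_isom _ _ Hact).
Qed.

Definition upper_almost_fixed (n : nat) (y : X) : Prop :=
  forall s, Rabs s <= INR n -> dist (act (SL2_upper s) y) y <= / (INR n + 1).

Lemma upper_almost_fixed_mono (m n : nat) (y : X) :
  (m <= n)%nat -> upper_almost_fixed n y -> upper_almost_fixed m y.
Proof.
  intros Hmn H s Hs; pose proof (le_INR _ _ Hmn); pose proof (pos_INR m).
  eapply Rle_trans; [apply H; lra |]; apply Rinv_le_contravar; lra.
Qed.

Lemma upper_almost_fixed_closed (x : X) (n : nat) :
  SL2_closed (fun k => upper_almost_fixed n (act k x)).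
Proof.
  intros k Hk s Hs; apply Rle_plus_epsilon; intros e He.
  destruct (orbit_continuous k x (e / 2)) as (d & Hd & Hc); [lra |].
  destruct (Hk d Hd) as (k' & Hk' & Hkk'); specialize (Hc k' Hkk'); specialize (Hk' s Hs).
  set (y := act k x) in *; set (y' := act k' x) in *.
  pose proof (Defs.dist_tri _ Hmet (act (SL2_upper s) y) (act (SL2_upper s) y') y).
  pose proof (Defs.dist_tri _ Hmet (act (SL2_upper s) y') y' y).
  rewrite (act_isom _ _ Hact) in *; rewrite (Defs.dist_sym _ Hmet y' y) in *; lra.
Qed.

Lemma large_column_almost_fixed (p : X) (n : nat) :
  exists R0, forall h, act h p = p -> sa h ^ 2 + sc h ^ 2 > R0 ->
    exists k, is_rotation k /\ upper_almost_fixed n (act k p).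
Proof.
  assert (Hn : 0 <= INR n) by apply pos_INR.
  destruct (upper_orbit_small p (/ (INR n + 1))) as (d & Hd & Hsmall);
    [apply Rinv_0_lt_compat; lra |].
  exists (INR n / d); intros h Hh Hr.
  assert (Hdr : INR n < d * (sa h ^ 2 + sc h ^ 2)).
  { apply (Rmult_lt_compat_l d) in Hr; [| lra].
    replace (d * (INR n / d)) with (INR n) in Hr by (field; lra); exact Hr. }
  assert (Hpos : sa h ^ 2 + sc h ^ 2 > 0) by nra.
  destruct (upper_displacement_rescaled p h Hh Hpos) as (k & Hk & Hdisp).
  exists k; split; [exact Hk |]; intros s Hs; rewrite Hdisp; left; apply Hsmall.
  apply Rabs_le_inv in Hs; set (r2 := sa h ^ 2 + sc h ^ 2) in *.
  assert (Hq : s / r2 * r2 = s) by (field; lra).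
  set (q := s / r2) in *; apply Rabs_def1; nra.
Qed.

Lemma unbounded_stabilizer_almost_fixed (x0 : X) (n : nat) :
  ~ (exists M, forall g, stabilizer act x0 g ->
       Rabs (sa g) <= M /\ Rabs (sb g) <= M /\ Rabs (sc g) <= M /\ Rabs (sd g) <= M) ->
  exists k, is_rotation k /\ upper_almost_fixed n (act k x0).
Proof.
  intros Hunb; set (w := SL2_inv quarter_turn).
  destruct (large_column_almost_fixed x0 n) as [R1 H1].
  destruct (large_column_almost_fixed (act w x0) n) as [R2 H2].
  destruct (SL2_unbounded_column _ Hunb (Rmax R1 R2)) as (h & Hh & [Hac | Hbd]).
  - apply (H1 h Hh); pose proof (Rmax_l R1 R2); lra.
  (* The second column (b, d) of h is large: w h w^-1 fixes w x0 and has first column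
     (d, -b). *)
  - destruct (H2 (SL2_mul w (SL2_mul h quarter_turn))) as (k & Hk & Hfix).
    + rewrite <- !act_comp, (act_comp quarter_turn w), SL2_mulgV, (act_one _ _ Hact).
      unfold stabilizer in Hh; rewrite Hh; reflexivity.
    + replace (sa _ ^ 2 + sc _ ^ 2) with (sb h ^ 2 + sd h ^ 2) by (simpl; ring).
      pose proof (Rmax_r R1 R2); lra.
    + exists (SL2_mul k w); split;
        [apply rotation_mul; [exact Hk | apply rotation_quarter_turn_inv] |].
      rewrite <- act_comp; exact Hfix.
Qed.

Lemma unbounded_stabilizer_rotate_upper_fixed (x0 : X) :
  ~ (exists M, forall g, stabilizer act x0 g ->
       Rabs (sa g) <= M /\ Rabs (sb g) <= M /\ Rabs (sc g) <= M /\ Rabs (sd g) <= M) ->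
  exists k, forall s, act (SL2_upper s) (act k x0) = act k x0.
Proof.
  intros Hunb.
  destruct (SL2_compact_nested is_rotation
              (fun n k => is_rotation k /\ upper_almost_fixed n (act k x0))
              SL2_compact_rotations) as [k Hk].
  - intros n; apply SL2_closed_and; [exact rotations_closed | apply upper_almost_fixed_closed].
  - intros n g; tauto.
  - intros m n g Hmn [? ?]; split; [| apply (upper_almost_fixed_mono m n)]; assumption.
  - intros n; apply unbounded_stabilizer_almost_fixed, Hunb.
  - exists k; intros s; apply eq_of_dist_small; intros e He.
    destruct (INR_unbounded (Rabs s + / e)) as [n Hn].
    pose proof (Rabs_pos s); pose proof (Rinv_0_lt_compat e He).
    eapply Rle_lt_trans; [apply (proj2 (Hk n)); lra |].
    rewrite <- (Rinv_inv e); apply Rinv_lt_contravar; [apply Rmult_lt_0_compat |]; lra.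
Qed.

End IsometricAction.

Theorem theorem1p5 (X : Type) (dist : X -> X -> R) (act : SL2 -> X -> X) (x0 : X)
  (Hmet : is_metric dist) (Hact : is_cont_isom_action dist act) :
  (forall g : SL2, act g x0 = x0) \/ SL2_compact (stabilizer act x0).
Proof.
  destruct (classic (exists M, forall g, stabilizer act x0 g ->
       Rabs (sa g) <= M /\ Rabs (sb g) <= M /\ Rabs (sc g) <= M /\ Rabs (sd g) <= M))
    as [[M HM] | Hunb].
  - right; exact (SL2_closed_bounded_compact _ M (stabilizer_closed _ _ _ Hmet Hact x0) HM).
  - left.
    destruct (unbounded_stabilizer_rotate_upper_fixed _ _ _ Hmet Hact x0 Hunb) as [k Hk].
    set (z := act k x0) in Hk.
    assert (Hz : forall g, act g z = z) by exact (upper_fixed_fixed _ _ _ Hmet Hact z Hk).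
    assert (Hx0 : x0 = z).
    { rewrite <- (Hz (SL2_inv k)); unfold z.
      rewrite (act_comp _ _ _ Hact), SL2_mulVg, (act_one _ _ Hact); reflexivity. }
    intros g; rewrite Hx0; apply Hz.
Qed.
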